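(* Let $u(z)=z+\sum_{n\ge1}u_nz^{n+1}\in\mathbb{C}[[z]]$. For every character $\varphi$ of $\mathcal H_{CK}$ (an algebra morphism $\mathcal H_{CK}\to\mathbb C$, so $\varphi(\emptyset)=1$), one has $$\alpha_u\Big(\sum_{t}\varphi(\mathrm{sk}(t))\,S^t\Big)=\sum_{T}\varphi(T)\,A_T(z),$$ where $t$ runs over reduced plane trees and $T$ over $\mathbb{N}^*$-decorated rooted trees (including the empty tree $\emptyset$). That is, $\alpha_u\circ\mathrm{sk}^*=\rho_u$, where $\mathrm{sk}^*(\varphi)=\varphi\circ\mathrm{sk}$ and $\rho_u(\varphi)(z)=\sum_T\varphi(T)A_T(z)$.
   Context: A reduced plane tree is a rooted plane tree in which every internal vertex has at least two children; $|$ denotes the single-leaf tree. The monomial $S^t$ in noncommuting variables $S_0,S_1,\dots$ is $S^{|}=S_0$ and $S^t=S_{n-1}S^{t_1}\cdots S^{t_n}$ if the root of $t$ has children subtrees $t_1,\dots,t_n$ ($n\ge2$). $\alpha_u$ sends a formal series $\sum_t c_tS^t$ to the formal power series $\sum_t c_t\,\alpha_u(S^t)\in\mathbb{C}[[z]]$, where $\alpha_u(S^t)$ is obtained by replacing $S_0$ by $z$ and $S_n$ by $u_n$ ($n\ge1$) in the commutative product. $\mathcal H_{CK}$ is the commutative polynomial algebra on the non-plane rooted trees with vertices decorated by positive integers (monomials are forests, unit the empty forest $\emptyset$); for a forest $F$, $B_n^+(F)$ is the tree with a new root decorated $n$ attached to the roots of $F$. The skeleton map is $\mathrm{sk}(|)=\emptyset$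 and $\mathrm{sk}(t)=B^+_{n-1}(\mathrm{sk}(t_1)\cdots\mathrm{sk}(t_n))$ if the root of $t$ has children subtrees $t_1,\dots,t_n$. The power series $A_T(z)$ are defined recursively: $A_\emptyset(z)=z$; $A_{B_n^+(\emptyset)}(z)=u_nz^{n+1}$; and if $T=B_n^+(T_1^{a_1}\cdots T_k^{a_k})$ with $T_1,\dots,T_k$ distinct nonempty decorated trees with multiplicities $a_1,\dots,a_k$, then $A_T(z)=\frac{1}{a_1!\cdots a_k!}A_{T_1}(z)^{a_1}\cdots A_{T_k}(z)^{a_k}\,\partial_z^{a_1+\cdots+a_k}\big(u_nz^{n+1}\big)$. *)

From HB Require Import structures.
From mathcomp Require Import all_boot all_order all_algebra.
From mathcomp Require Import boolp classical_sets cardinality fsbigop reals.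
From mathcomp Require Import complex.
Set Implicit Arguments. Unset Strict Implicit. Unset Printing Implicit Defensive.
Import Order.TTheory GRing.Theory Num.Theory.

Inductive ptree := PLeaf | PNode of seq ptree.

Fixpoint ptree_enc (t : ptree) : GenTree.tree unit :=
  match t with
  | PLeaf => GenTree.Node 0 [::]
  | PNode ts => GenTree.Node 1 (map ptree_enc ts)
  end.

Fixpoint ptree_dec (g : GenTree.tree unit) : ptree :=
  match g with
  | GenTree.Leaf _ => PLeaf
  | GenTree.Node 0 _ => PLeaf
  | GenTree.Node _ l => PNode (map ptree_dec l)
  end.

Fixpoint ptree_encK_aux (t : ptree) : ptree_dec (ptree_enc t) = t :=
  match t return ptree_dec (ptree_enc t) = t with
  | PLeaf => erefl
  | PNode ts =>
    f_equal PNode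
      ((fix aux (l : seq ptree) : map ptree_dec (map ptree_enc l) = l :=
         match l return map ptree_dec (map ptree_enc l) = l with
         | [::] => erefl
         | s :: l' => f_equal2 cons (ptree_encK_aux s) (aux l')
         end) ts)
  end.

Lemma ptree_encK : cancel ptree_enc ptree_dec.
Proof. exact: ptree_encK_aux. Qed.

HB.instance Definition _ := Countable.copy ptree (can_type ptree_encK).

Fixpoint reduced (t : ptree) : bool :=
  match t with
  | PLeaf => true
  | PNode ts => (1 < size ts) && all reduced ts
  end.

(* the noncommutative monomial S^t, encoded as the word of indices of the S_i:
   S^| = S_0,  S^t = S_{n-1} S^{t_1} ... S^{t_n} *)
Fixpoint Sword (t : ptree) : seq nat :=
  match t with
  | PLeaf => [:: 0]
  | PNode ts => (size ts).-1 :: flatten (map Sword ts)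
  end.

Inductive dtree := DNode of nat & seq dtree.

Fixpoint dtree_enc (t : dtree) : GenTree.tree unit :=
  match t with DNode n ts => GenTree.Node n (map dtree_enc ts) end.

Fixpoint dtree_dec (g : GenTree.tree unit) : dtree :=
  match g with
  | GenTree.Leaf _ => DNode 0 [::]
  | GenTree.Node n l => DNode n (map dtree_dec l)
  end.

Fixpoint dtree_encK_aux (t : dtree) : dtree_dec (dtree_enc t) = t :=
  match t return dtree_dec (dtree_enc t) = t with
  | DNode n ts =>
    f_equal (DNode n)
      ((fix aux (l : seq dtree) : map dtree_dec (map dtree_enc l) = l :=
         match l return map dtree_dec (map dtree_enc l) = l with
         | [::] => erefl
         | s :: l' => f_equal2 cons (dtree_encK_aux s) (aux l')
         end) ts)
  end.

Lemma dtree_encK : cancel dtree_enc dtree_dec.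
Proof. exact: dtree_encK_aux. Qed.

HB.instance Definition _ := Countable.copy dtree (can_type dtree_encK).

(* Non-plane decorated rooted trees are represented by canonical plane
   representatives: children lists (recursively) sorted by a fixed total order. *)
Definition dle (a b : dtree) : bool := (pickle a <= pickle b)%N.

Fixpoint canon (t : dtree) : dtree :=
  match t with DNode n ts => DNode n (sort dle (map canon ts)) end.

Fixpoint dpos (t : dtree) : bool :=
  match t with DNode n ts => (0 < n)%N && all dpos ts end.

Definition dvalid (t : dtree) : bool := dpos t && (canon t == t).

(* elements of {emptyset} U {decorated trees}: None = the empty tree/forest *)
Definition ovalid (o : option dtree) : bool :=
  if o is Some t then dvalid t else true.

Definition Bplus (n : nat) (F : seq dtree) : dtree := canon (DNode n F).

(* skeleton map: sk(|) = emptyset, sk(t) = B^+_{n-1}(sk(t_1)...sk(t_n)),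
   the empty forest being the unit of H_CK *)
Fixpoint sk (t : ptree) : option dtree :=
  match t with
  | PLeaf => None
  | PNode ts => Some (Bplus (size ts).-1 (pmap sk ts))
  end.

(* a character of H_CK is determined by arbitrary values on trees, and sends
   the empty forest (the unit) to 1 *)
Definition charE (C : pzRingType) (phi : dtree -> C) (o : option dtree) : C :=
  if o is Some t then phi t else 1.

Local Open Scope ring_scope.

Definition alpha (C : comNzRingType) (u : nat -> C) (w : seq nat) : {poly C} :=
  \prod_(i <- w) (if i == 0%N then 'X else (u i)%:P).

Fixpoint Atree (C : fieldType) (u : nat -> C) (t : dtree) : {poly C} :=
  match t with
  | DNode n ts =>
    ((\prod_(s <- undup ts) (count_mem s ts)`!)%:R)^-1 *:
      ((\prod_(p <- map (Atree u) ts) p) * ((u n)%:P * 'X^(n.+1))^`(size ts))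
  end.

Definition A (C : fieldType) (u : nat -> C) (o : option dtree) : {poly C} :=
  if o is Some t then Atree u t else 'X.

From Pilot Require Import Defs.
From HB Require Import structures.
From mathcomp Require Import all_boot all_order all_algebra.
From mathcomp Require Import boolp classical_sets cardinality fsbigop reals.
From mathcomp Require Import complex.
Import Order.TTheory GRing.Theory Num.Theory.
Set Implicit Arguments. Unset Strict Implicit. Unset Printing Implicit Defensive.

(* Both sides are sums over skeletons.  Let T = B+_n(T_1^a_1 ... T_j^a_j) have
   m = a_1 + ... + a_j children.  A reduced plane tree t with sk t = T has a root
   with n+1 children, m of them with skeletons T_1, ..., T_j (with multiplicities)
   and n+1-m of them leaves; so t is given by one of the
   (n+1)!/((n+1-m)! a_1! ... a_j!) arrangements of these skeletons together with a
   plane tree above each child.  Since alpha_u is multiplicative, induction on T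
   shows that alpha_u summed over this fiber is
   u_n z^(n+1-m) (n+1)!/((n+1-m)! a_1! ... a_j!) A_T_1^a_1 ... A_T_j^a_j = A_T(z),
   the falling factorial coming from the m-th derivative of z^(n+1).  In degree k
   only the finitely many reduced trees with k leaves contribute, which makes both
   sums finite and lets them be regrouped fiber by fiber. *)

Fixpoint prodseq (T : Type) (ls : seq (seq T)) : seq (seq T) :=
  if ls is l :: ls' then [seq x :: s | x <- l, s <- prodseq ls'] else [:: [::]].

Lemma mem_prodseq (T : eqType) (ls : seq (seq T)) (s : seq T) :
  (s \in prodseq ls) = all2 (fun x l => x \in l) s ls.
Proof.
elim: ls s => [|l ls IH] [|x s] //=.
  by apply/negbTE/allpairsP => -[[a b] [_ _]].
apply/allpairsP/andP => [[[a b] /= [al bls [-> ->]]]|[xl sls]]; first by rewrite al -IH.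
by exists (x, s); rewrite IH.
Qed.

Lemma prodseq_uniq (T : eqType) (ls : seq (seq T)) :
  all uniq ls -> uniq (prodseq ls).
Proof.
elim: ls => [|l ls IH] //= /andP [ul /IH uls].
by apply: allpairs_uniq => // -[a b] [c d] _ _ /= [-> ->].
Qed.

Lemma perm_nseq_None (T : eqType) (r : seq (option T)) m (cs : seq T) :
  perm_eq r (nseq m None ++ map Some cs) =
  (size r == m + size cs) && perm_eq (pmap id r) cs.
Proof.
apply/idP/andP => [pe|[/eqP size_r pe]].
  rewrite (perm_size pe) size_cat size_nseq size_map; split => //.
  by have := perm_pmap id pe; rewrite pmap_cat map_pK //; elim: m {pe}.
have count_None : count_mem None r + size (pmap id r) = size r.
  by elim: r {size_r pe} => [|[x|] r IH] //=; rewrite -IH ?addnS.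
have split_r : perm_eq r (nseq (count_mem None r) None ++ map Some (pmap id r)).
  elim: r {size_r pe count_None} => [|[x|] r IH] //=; rewrite add0n; last by rewrite perm_cons.
  by rewrite perm_sym -cat1s perm_catCA /= perm_cons perm_sym.
apply: (perm_trans split_r); rewrite (_ : count_mem None r = m).
  by rewrite perm_cat2l perm_map.
by apply/eqP; rewrite -(eqn_add2r (size (pmap id r))) count_None size_r (perm_size pe).
Qed.

Lemma prodfact_count_rem (T : eqType) (U s : seq T) (x : T) :
  uniq U -> x \in U -> x \in s ->
  \prod_(y <- U) (count_mem y s)`! =
  count_mem x s * \prod_(y <- U) (count_mem y (rem x s))`!.
Proof.
move=> uU xU xs; have count_rem y : count_mem y s = (x == y) + count_mem y (rem x s).
  by rewrite (permP (perm_to_rem xs)) /= eq_sym.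
rewrite (bigD1_seq x) //= [in RHS](bigD1_seq x) //= count_rem eqxx factS mulnA.
by congr (_ * _)%N; apply: eq_bigr => y /negbTE yx; rewrite count_rem eq_sym yx.
Qed.

Lemma size_permutations_count (T : eqType) (U s : seq T) :
  uniq U -> {subset s <= U} ->
  size (permutations s) * \prod_(y <- U) (count_mem y s)`! = (size s)`!.
Proof.
move=> uU; move Dn: (size s) => n; elim: n s Dn => [|n IH] s Dn sU.
  by case: s Dn {sU} => // _; rewrite big1_seq.
have s_gt0 : 0 < size s by rewrite Dn.
rewrite (perm_size (permutationsE s_gt0)) size_allpairs_dep sumnE big_map big_distrl /=.
transitivity (\sum_(x <- undup s) count_mem x s * n`!).
  apply: eq_big_seq => x; rewrite mem_undup => xs.
  rewrite (prodfact_count_rem uU (sU x xs) xs) mulnCA IH ?size_rem ?Dn //.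
  by move=> y /mem_rem /sU.
rewrite -big_distrl factS -Dn -(perm_size (perm_count_undup s)) /=.
rewrite size_flatten sumnE !big_map; congr (_ * _)%N.
by apply: eq_bigr => x _; rewrite size_nseq.
Qed.

Section BigSums.
Local Open Scope ring_scope.

Lemma big_prodseq (R : comNzRingType) (T : Type) (f : T -> R) (ls : seq (seq T)) :
  \sum_(s <- prodseq ls) \prod_(x <- s) f x = \prod_(l <- ls) \sum_(x <- l) f x.
Proof.
elim: ls => [|l ls IH] /=; first by rewrite big_seq1 !big_nil.
rewrite big_allpairs_dep big_cons mulr_suml; apply: eq_bigr => x _.
by rewrite -IH mulr_sumr; apply: eq_bigr => s _; rewrite big_cons.
Qed.

Lemma big_undup_map_fibers (R : nmodType) (I J : eqType) (h : I -> J) (r : seq I)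
    (F : I -> R) :
  \sum_(i <- r) F i = \sum_(j <- undup (map h r)) \sum_(i <- r | h i == j) F i.
Proof.
rewrite [RHS](exchange_big_dep xpredT) //=; apply: eq_big_seq => i i_r.
under eq_bigl do rewrite eq_sym.
by rewrite -big_filter filter_pred1_uniq ?undup_uniq ?mem_undup ?map_f // big_seq1.
Qed.

Local Open Scope classical_set_scope.

Lemma fsbig_supported_seq (R : nmodType) (T : choiceType) (D : set T) (r : seq T)
    (f : T -> R) :
  uniq r -> (forall i, i \in r -> D i) -> (forall i, D i -> i \notin r -> f i = 0) ->
  finite_set [set i | D i /\ f i != 0] /\ \sum_(i \in D) f i = \sum_(i <- r) f i.
Proof.
move=> uniq_r r_D f_eq0; split.
  apply: (sub_finite_set _ (finite_seq r)) => i [Di]; apply: contraNT => i_r.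
  by rewrite f_eq0.
rewrite (fsbigE r) // big_seq_cond [RHS]big_seq; apply: eq_bigl => i.
by rewrite andb_idr // => /r_D/mem_set.
Qed.

End BigSums.

Lemma ptree_ind_mem (P : ptree -> Prop) :
  P PLeaf -> (forall ts, {in ts, forall t, P t} -> P (PNode ts)) -> forall t, P t.
Proof.
move=> P_leaf P_node; fix IH 1 => -[|ts]; [exact: P_leaf | apply: P_node].
(* No [done] here: it would close goals with the unguarded [IH]. *)
elim: ts => [|t ts IHts] s; first (rewrite in_nil; discriminate).
rewrite inE => /predU1P [e|]; [rewrite e; exact: IH | exact: IHts].
Qed.

Lemma dtree_ind_mem (P : dtree -> Prop) :
  (forall n ts, {in ts, forall t, P t} -> P (DNode n ts)) -> forall t, P t.
Proof.
move=> P_node; fix IH 1 => -[n ts]; apply: P_node.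
elim: ts => [|t ts IHts] s; first (rewrite in_nil; discriminate).
rewrite inE => /predU1P [e|]; [rewrite e; exact: IH | exact: IHts].
Qed.

Lemma dle_total : total dle.
Proof. by move=> a b; exact: leq_total. Qed.

Lemma dle_trans : transitive dle.
Proof. by move=> b a c; exact: leq_trans. Qed.

Lemma dle_anti : antisymmetric dle.
Proof. by move=> a b /anti_leq; exact: (pcan_inj (@pickleK dtree)). Qed.

Lemma sort_dle_perm (s cs : seq dtree) : sort dle cs = cs ->
  (sort dle s == cs) = perm_eq s cs.
Proof.
move=> sorted_cs; apply/eqP/idP => [<-|pe]; first by rewrite perm_sym perm_sort.
rewrite -sorted_cs; apply/perm_sortP => //; [exact: dle_total|exact: dle_trans|exact: dle_anti].
Qed.

Lemma canon_idem (t : dtree) : Defs.canon (Defs.canon t) = Defs.canon t.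
Proof.
elim/dtree_ind_mem: t => n ts IH /=; congr DNode.
rewrite map_id_in; last by move=> x; rewrite mem_sort => /mapP [y /IH ? ->].
by rewrite sorted_sort //; [exact: dle_trans | exact: sort_sorted dle_total _].
Qed.

Lemma dpos_canon (t : dtree) : dpos (Defs.canon t) = dpos t.
Proof.
elim/dtree_ind_mem: t => n ts IH /=; rewrite all_sort all_map; congr andb.
exact: eq_in_all.
Qed.

Lemma dvalid_children n cs : dvalid (DNode n cs) ->
  [/\ 0 < n, {in cs, forall c, dvalid c} & sort dle cs = cs].
Proof.
case/andP => /= /andP [n_gt0 pos_cs] /eqP [canon_cs].
have cs_canon c : c \in cs -> Defs.canon c = c.
  by rewrite -{1}canon_cs mem_sort => /mapP [y _ ->]; exact: canon_idem.
split => //; last by rewrite -{2}canon_cs map_id_in.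
by move=> c c_cs; rewrite /dvalid (allP pos_cs c c_cs) cs_canon ?eqxx.
Qed.

Lemma sk_valid (t : ptree) : reduced t -> ovalid (sk t).
Proof.
elim/ptree_ind_mem: t => // ts IH /= /andP [size_ts red_ts].
rewrite /dvalid /Bplus canon_idem eqxx andbT dpos_canon /=.
apply/andP; split; first by case: ts size_ts {IH red_ts} => [|a [|b l]].
apply/allP => x; rewrite mem_pmap => /mapP [t t_ts sk_t].
by have := IH t t_ts (allP red_ts t t_ts); rewrite -sk_t => /andP [].
Qed.

Lemma sk_PNode ts : all reduced ts ->
  sk (PNode ts) = Some (DNode (size ts).-1 (sort dle (pmap sk ts))).
Proof.
move=> /allP red_ts; rewrite /= /Bplus /= map_id_in //.
move=> x; rewrite mem_pmap => /mapP [t t_ts sk_t].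
by have := sk_valid (red_ts t t_ts); rewrite -sk_t => /andP [_ /eqP].
Qed.

Definition leaves (t : ptree) : nat := count_mem 0%N (Sword t).

Lemma leaves_PNode ts : reduced (PNode ts) -> leaves (PNode ts) = \sum_(t <- ts) leaves t.
Proof.
case/andP => size_ts _; rewrite /leaves /= count_flatten sumnE !big_map.
by case: ts size_ts => [|a [|b l]].
Qed.

Lemma leaves_gt0 (t : ptree) : reduced t -> 0 < leaves t.
Proof.
elim/ptree_ind_mem: t => // ts IH red_t; rewrite leaves_PNode //.
case/andP: red_t; case: ts IH => // t ts IH _ /andP [red_t _].
by rewrite big_cons ltn_addr // IH ?mem_head.
Qed.

Lemma leaves_child ts t : reduced (PNode ts) -> t \in ts ->
  leaves t < leaves (PNode ts).
Proof.
move=> red_ts t_ts; rewrite leaves_PNode // (big_rem t t_ts) /= -addn1 leq_add2l.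
case/andP: red_ts => size_ts /allP red_ts.
have : 0 < size (rem t ts) by rewrite size_rem //; case: ts size_ts {red_ts t_ts}.
case E: (rem t ts) => [|s l] //= _; rewrite big_cons ltn_addr // leaves_gt0 //.
by apply: red_ts; apply: (mem_rem (x := t)); rewrite E mem_head.
Qed.

Lemma size_le_leaves ts : reduced (PNode ts) -> size ts <= leaves (PNode ts).
Proof.
move=> red_ts; rewrite leaves_PNode // -sum1_size big_seq [X in _ <= X]big_seq.
by apply: leq_sum => t t_ts; rewrite leaves_gt0 //; case/andP: red_ts => _ /allP; apply.
Qed.

(* A reduced tree with at most [f] leaves has at most [f] children, each with at
   most [f.-1] leaves. *)
Fixpoint reduced_enum (f : nat) : seq ptree :=
  if f is f'.+1 then
    PLeaf :: [seq PNode ts | l <- iota 2 f', ts <- prodseq (nseq l (reduced_enum f'))]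
  else [::].

Lemma reduced_enumP f (t : ptree) : reduced t -> leaves t <= f -> t \in reduced_enum f.
Proof.
elim: f t => [|f IH] t red_t le_tf.
  by have := leaves_gt0 red_t; rewrite lt0n -leqn0 le_tf.
case: t red_t le_tf => [|ts] red_ts le_tf; rewrite /= ?mem_head // inE /=.
apply/allpairsPdep; exists (size ts), ts; split => //.
  rewrite mem_iota addnC addn2 ltnS (leq_trans (size_le_leaves red_ts)) ?andbT //.
  by case/andP: red_ts.
have children_in : all (fun x => x \in reduced_enum f) ts.
  apply/allP => x x_ts; have lt_x := leaves_child red_ts x_ts.
  apply: IH; first by case/andP: red_ts => _ /allP; apply.
  by rewrite -ltnS (leq_trans lt_x).
by rewrite mem_prodseq; elim: ts children_in {red_ts le_tf} => //= x ts IHts /andP [-> /IHts].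
Qed.

Definition reduced_with_leaves (k : nat) : seq ptree :=
  [seq t <- undup (reduced_enum k) | reduced t && (leaves t == k)].

Lemma mem_reduced_with_leaves k t :
  (t \in reduced_with_leaves k) = reduced t && (leaves t == k).
Proof.
rewrite mem_filter mem_undup andb_idr // => /andP [red_t /eqP leaves_t].
by apply: reduced_enumP; rewrite ?leaves_t.
Qed.

Lemma reduced_with_leaves_uniq k : uniq (reduced_with_leaves k).
Proof. by rewrite filter_uniq ?undup_uniq. Qed.

(* [fibers] stands for [map sk_fiber cs], which keeps the recursion in
   [sk_fiber] structural. *)
Definition child_fibers_at (cs : seq dtree) (fibers : seq (seq ptree))
    (y : option dtree) : seq ptree :=
  if y is Some c then nth [::] fibers (index c cs) else [:: PLeaf].

(* The skeletons of the [n.+1] children of a plane tree above [DNode n cs], up to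
   order; a leaf has the empty skeleton [None].  The test [size cs <= n.+1] in
   [sk_fiber] excludes the junk values of the truncated subtraction. *)
Definition child_skeletons (n : nat) (cs : seq dtree) : seq (option dtree) :=
  nseq (n.+1 - size cs) None ++ map Some cs.

Fixpoint sk_fiber (T : dtree) : seq ptree :=
  let: DNode n cs := T in
  if size cs <= n.+1 then
    [seq PNode ts | r <- permutations (child_skeletons n cs),
                    ts <- prodseq (map (child_fibers_at cs (map sk_fiber cs)) r)]
  else [::].

Lemma child_fibers_at_Some cs c : c \in cs ->
  child_fibers_at cs (map sk_fiber cs) (Some c) = sk_fiber c.
Proof. by move=> c_cs; rewrite /= (nth_map (DNode 0 [::])) ?index_mem ?nth_index. Qed.

Lemma size_child_skeletons n cs : size cs <= n.+1 -> size (child_skeletons n cs) = n.+1.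
Proof. by move=> le_cs; rewrite size_cat size_nseq size_map subnK. Qed.

Lemma sk_PNode_eq n cs ts : 0 < n -> sort dle cs = cs -> all reduced ts ->
  reduced (PNode ts) && (sk (PNode ts) == Some (DNode n cs)) =
  (size cs <= n.+1) && perm_eq (map sk ts) (child_skeletons n cs).
Proof.
move=> n_gt0 sorted_cs red_ts.
have pmap_sk : pmap id (map sk ts) = pmap sk ts.
  by elim: ts {red_ts} => //= t ts ->; case: (sk t).
rewrite sk_PNode // /= red_ts andbT perm_nseq_None size_map pmap_sk -sort_dle_perm //.
case: (leqP (size cs) n.+1) => [le_cs|lt_cs] /=; last first.
  apply/negbTE; apply: contraTN lt_cs => /andP [lt1 /eqP [<- <-]].
  by rewrite (prednK (ltnW lt1)) size_sort size_pmap ltnNge negbK count_size.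
rewrite subnK //; apply/andP/andP => [[lt1 /eqP [<- ->]]|[/eqP size_ts /eqP <-]].
  by rewrite (prednK (ltnW lt1)).
by rewrite size_ts ltnS n_gt0.
Qed.

Lemma mem_prodseq_child_fibers n cs (r : seq (option dtree)) ts :
  {in cs, forall c t, (t \in sk_fiber c) = reduced t && (sk t == Some c)} ->
  {subset r <= child_skeletons n cs} ->
  (ts \in prodseq (map (child_fibers_at cs (map sk_fiber cs)) r)) =
  all reduced ts && (map sk ts == r).
Proof.
move=> fiber_cs; rewrite mem_prodseq.
elim: ts r => [|t ts IHts] [|y r] r_sub //=; first by rewrite andbF.
rewrite eqseq_cons IHts => [|z z_r]; last by rewrite r_sub // inE z_r orbT.
rewrite andbACA; congr (_ && _).
have := r_sub y (mem_head y r); rewrite mem_cat => /orP [/nseqP [-> _]|/mapP [c c_cs ->]].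
  by case: t => [|ts'] /=; rewrite ?inE //= andbF.
by rewrite child_fibers_at_Some // fiber_cs.
Qed.

Lemma mem_sk_fiber T t : dvalid T -> (t \in sk_fiber T) = reduced t && (sk t == Some T).
Proof.
elim/dtree_ind_mem: T t => n cs IH t /dvalid_children [n_gt0 valid_cs sorted_cs].
have fiber_cs : {in cs, forall c t, (t \in sk_fiber c) = reduced t && (sk t == Some c)}.
  by move=> c c_cs s; rewrite IH // valid_cs.
rewrite [sk_fiber _]/=; case: t => [|ts].
  by case: ifP => // _; apply/negbTE/allpairsPdep => -[r [ts [_ _]]].
have [red_ts|nred_ts] := boolP (all reduced ts); last first.
  rewrite /= (negbTE nred_ts) andbF; case: ifP => // _; apply/negbTE/allpairsPdep.
  move=> -[r [ts' [/[!mem_permutations] r_perm + [ts_ts']]]]; rewrite -ts_ts'.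
  rewrite (mem_prodseq_child_fibers (n := n)) ?(negbTE nred_ts) // => y.
  by rewrite (perm_mem r_perm).
rewrite sk_PNode_eq //; case: ifP => // le_cs.
apply/allpairsPdep/idP => [[r [ts' [/[!mem_permutations] r_perm + [ts_ts']]]]|ts_perm].
  rewrite -ts_ts' (mem_prodseq_child_fibers (n := n)) // => [/andP [_ /eqP ->] //|y].
  by rewrite (perm_mem r_perm).
exists (map sk ts), ts; split; rewrite ?mem_permutations //.
rewrite (mem_prodseq_child_fibers (n := n)) ?red_ts ?eqxx // => y.
by rewrite (perm_mem ts_perm).
Qed.

Lemma sk_fiber_uniq T : dvalid T -> uniq (sk_fiber T).
Proof.
elim/dtree_ind_mem: T => n cs IH /dvalid_children [n_gt0 valid_cs sorted_cs].
have fiber_cs : {in cs, forall c t, (t \in sk_fiber c) = reduced t && (sk t == Some c)}.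
  by move=> c c_cs t; rewrite mem_sk_fiber // valid_cs.
have sub_r r : r \in permutations (child_skeletons n cs) -> {subset r <= child_skeletons n cs}.
  by rewrite mem_permutations => r_perm y; rewrite (perm_mem r_perm).
rewrite [sk_fiber _]/=; case: ifP => // le_cs.
apply: allpairs_uniq_dep => [|r r_perm|]; first exact: permutations_uniq.
  apply: prodseq_uniq; apply/allP => _ /mapP [y y_r ->].
  move: (sub_r r r_perm y y_r); rewrite mem_cat => /orP [/nseqP [-> _] //|/mapP [c c_cs ->]].
  by rewrite child_fibers_at_Some // IH // valid_cs.
move=> p1 p2 /allpairsPdep [r1 [ts1 [r1_perm ts1_in ->]]].
move=> /allpairsPdep [r2 [ts2 [r2_perm ts2_in ->]]] /= [ts12].
move: ts1_in ts2_in; rewrite -{}ts12 !(mem_prodseq_child_fibers (n := n)) //; try exact: sub_r.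
by move=> /andP [_ /eqP <-] /andP [_ /eqP <-].
Qed.

Lemma size_permutations_child_skeletons n cs : size cs <= n.+1 ->
  size (permutations (child_skeletons n cs)) * \prod_(c <- undup cs) (count_mem c cs)`!
  = n.+1 ^_ size cs.
Proof.
move=> le_cs; set U := None :: map Some (undup cs).
have uniq_U : uniq U.
  by rewrite /= (map_inj_uniq (@Some_inj _)) undup_uniq andbT; apply/mapP => -[].
have sub_U : {subset child_skeletons n cs <= U}.
  move=> y; rewrite mem_cat => /orP [/nseqP [-> _]|/mapP [c c_cs ->]]; first exact: mem_head.
  by rewrite inE map_f ?mem_undup.
have count_None : count_mem None (child_skeletons n cs) = n.+1 - size cs.
  by rewrite count_cat count_nseq /= mul1n count_map (@eq_count _ _ pred0) // count_pred0 addn0.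
have count_Some c : count_mem (Some c) (child_skeletons n cs) = count_mem c cs.
  rewrite count_cat count_nseq /= mul0n count_map.
  by apply: eq_count => x /=; rewrite (inj_eq (@Some_inj _)).
have := size_permutations_count uniq_U sub_U.
rewrite size_child_skeletons // big_cons big_map count_None; under eq_bigr do rewrite count_Some.
rewrite -(ffact_fact le_cs) mulnCA => /eqP; rewrite [X in _ == X]mulnC eqn_pmul2l ?fact_gt0 //.
by move=> /eqP.
Qed.

Local Open Scope ring_scope.

Lemma alpha_shape (C : comNzRingType) (u : nat -> C) (w : seq nat) :
  alpha u w = (\prod_(i <- w | i != 0%N) u i)%:P * 'X^(count_mem 0%N w).
Proof.
elim: w => [|a w IH]; first by rewrite /alpha !big_nil mul1r.
rewrite /alpha !big_cons -/(alpha u w) IH /=; case: eqP => [->|_] /=.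
  by rewrite add1n exprS mulrCA.
by rewrite add0n polyCM mulrA.
Qed.

Lemma coef_alpha_Sword (C : comNzRingType) (u : nat -> C) (t : ptree) k :
  leaves t != k -> (alpha u (Sword t))`_k = 0.
Proof. by rewrite alpha_shape coefCM coefXn eq_sym => /negbTE ->; rewrite mulr0. Qed.

Lemma alpha_PNode (C : comNzRingType) (u : nat -> C) ts :
  alpha u (Sword (PNode ts)) =
  (if (size ts).-1 == 0%N then 'X else (u (size ts).-1)%:P) * \prod_(t <- ts) alpha u (Sword t).
Proof. by rewrite /alpha /= big_cons big_flatten /= big_map. Qed.

Lemma sum_alpha_child_fibers (C : comNzRingType) (u : nat -> C) n cs r :
  {in cs, forall c t, (t \in sk_fiber c) = reduced t && (sk t == Some c)} ->
  (0 < n)%N -> (size cs <= n.+1)%N -> r \in permutations (child_skeletons n cs) ->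
  \sum_(ts <- prodseq (map (child_fibers_at cs (map sk_fiber cs)) r)) alpha u (Sword (PNode ts))
  = (u n)%:P * 'X^(n.+1 - size cs) * \prod_(c <- cs) \sum_(t <- sk_fiber c) alpha u (Sword t).
Proof.
move=> fiber_cs n_gt0 le_cs; rewrite mem_permutations => r_perm.
have r_sub : {subset r <= child_skeletons n cs} by move=> y; rewrite (perm_mem r_perm).
transitivity (\sum_(ts <- prodseq (map (child_fibers_at cs (map sk_fiber cs)) r))
                (u n)%:P * \prod_(t <- ts) alpha u (Sword t)).
  apply: eq_big_seq => ts; rewrite (mem_prodseq_child_fibers _ fiber_cs r_sub).
  case/andP => _ /eqP sk_ts; have size_ts : size ts = n.+1.
    by rewrite -(size_map sk) sk_ts (perm_size r_perm) size_child_skeletons.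
  by rewrite alpha_PNode size_ts /= gtn_eqF.
rewrite -mulr_sumr big_prodseq big_map (perm_big _ r_perm) big_cat big_nseq big_map /=.
rewrite big_seq1 /alpha /= big_seq1 iter_mulr_1 mulrA; congr (_ * _).
by apply: eq_big_seq => c c_cs; rewrite -(child_fibers_at_Some c_cs).
Qed.

Lemma Atree_DNode_sum (C : numFieldType) (u : nat -> C) n cs : (size cs <= n.+1)%N ->
  Atree u (DNode n cs) = \sum_(r <- permutations (child_skeletons n cs))
                           (u n)%:P * 'X^(n.+1 - size cs) * \prod_(c <- cs) Atree u c.
Proof.
move=> le_cs; rewrite /= big_map mul_polyC derivnZ derivnXn.
rewrite big_const_seq count_predT iter_addr_0 -(size_permutations_child_skeletons le_cs).
rewrite mulrnA -scaler_nat scalerA scalerAr scalerA.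
rewrite mulrCA mulVf ?mulr1; last by rewrite pnatr_eq0 -lt0n prodn_gt0 // => ?; exact: fact_gt0.
by rewrite -mul_polyC !mulrnAr mulrC.
Qed.

Lemma Atree_sk_fiber (C : numFieldType) (u : nat -> C) T : dvalid T ->
  Atree u T = \sum_(t <- sk_fiber T) alpha u (Sword t).
Proof.
elim/dtree_ind_mem: T => n cs IH /dvalid_children [n_gt0 valid_cs _].
have fiber_cs : {in cs, forall c t, (t \in sk_fiber c) = reduced t && (sk t == Some c)}.
  by move=> c c_cs t; rewrite mem_sk_fiber // valid_cs.
rewrite [sk_fiber _]/=; case: leqP => [le_cs|lt_cs]; last first.
  by rewrite /= mul_polyC derivnZ derivnXn ffact_small // mulr0n scaler0 mulr0 scaler0 big_nil.
rewrite Atree_DNode_sum // big_allpairs_dep; apply: eq_big_seq => r r_perm.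
rewrite (sum_alpha_child_fibers _ fiber_cs n_gt0 le_cs r_perm); congr (_ * _).
by apply: eq_big_seq => c c_cs; rewrite IH ?valid_cs.
Qed.

Definition osk_fiber (o : option dtree) : seq ptree :=
  if o is Some T then sk_fiber T else [:: PLeaf].

Lemma mem_osk_fiber o t : ovalid o -> (t \in osk_fiber o) = reduced t && (sk t == o).
Proof.
case: o => [T|] valid_o; first exact: mem_sk_fiber.
by rewrite mem_seq1; case: t => [|ts] //=; rewrite andbF.
Qed.

Lemma osk_fiber_uniq o : ovalid o -> uniq (osk_fiber o).
Proof. by case: o => [T|] //; exact: sk_fiber_uniq. Qed.

Lemma A_osk_fiber (C : numFieldType) (u : nat -> C) o : ovalid o ->
  A u o = \sum_(t <- osk_fiber o) alpha u (Sword t).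
Proof.
case: o => [T|] valid_o; first exact: Atree_sk_fiber.
by rewrite big_seq1 /alpha big_seq1.
Qed.

Lemma coef_A_reduced_with_leaves (C : numFieldType) (u : nat -> C) o k : ovalid o ->
  (A u o)`_k = \sum_(t <- reduced_with_leaves k | sk t == o) (alpha u (Sword t))`_k.
Proof.
move=> valid_o; rewrite A_osk_fiber // coef_sum.
rewrite (bigID (fun t => leaves t == k)) /= [X in _ + X]big1_seq ?addr0; last first.
  by move=> t /andP [/negbTE leaves_t _]; rewrite coef_alpha_Sword ?leaves_t.
rewrite -[LHS]big_filter -[RHS]big_filter; apply: perm_big; apply: uniq_perm.
- by rewrite filter_uniq ?osk_fiber_uniq.
- by rewrite filter_uniq ?reduced_with_leaves_uniq.
move=> t; rewrite mem_filter [RHS]mem_filter mem_osk_fiber // mem_reduced_with_leaves.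
by case: (leaves t == k); case: (sk t == o); rewrite ?andbF.
Qed.

Theorem mainTheorem9 (R : realType) (u : nat -> R[i]) (phi : dtree -> R[i])
    (k : nat) :
  finite_set [set t : ptree | reduced t /\
                (charE phi (sk t) * (alpha u (Sword t))`_k != 0)] /\
  finite_set [set T : option dtree | ovalid T /\
                (charE phi T * (A u T)`_k != 0)] /\
  \sum_(t \in [set t : ptree | reduced t]) charE phi (sk t) * (alpha u (Sword t))`_k
  = \sum_(T \in [set T : option dtree | ovalid T]) charE phi T * (A u T)`_k.
Proof.
pose r := reduced_with_leaves k; pose skr := undup (map sk r).
have r_reduced t : t \in r -> reduced t by rewrite mem_reduced_with_leaves => /andP [].
have skr_valid T : T \in skr -> ovalid T.
  by rewrite mem_undup => /mapP [t /r_reduced red_t ->]; exact: sk_valid.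
have trees_eq0 t : reduced t -> t \notin r -> charE phi (sk t) * (alpha u (Sword t))`_k = 0.
  rewrite mem_reduced_with_leaves => -> /= leaves_t.
  by rewrite coef_alpha_Sword ?mulr0.
have skeletons_eq0 T : ovalid T -> T \notin skr -> charE phi T * (A u T)`_k = 0.
  move=> valid_T T_skr; rewrite coef_A_reduced_with_leaves // big1_seq ?mulr0 //.
  by move=> t /andP [/eqP sk_t t_r]; move: T_skr; rewrite mem_undup -sk_t map_f.
have [fin_trees sum_trees] := fsbig_supported_seq (D := [set t | reduced t])
  (reduced_with_leaves_uniq k) r_reduced trees_eq0.
have [fin_skeletons sum_skeletons] :=
  fsbig_supported_seq (D := [set T | ovalid T]) (undup_uniq _) skr_valid skeletons_eq0.
split; [exact: fin_trees | split; [exact: fin_skeletons |]].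
rewrite sum_trees sum_skeletons (big_undup_map_fibers sk); apply: eq_big_seq => T T_skr.
rewrite coef_A_reduced_with_leaves ?skr_valid // mulr_sumr.
by apply: eq_bigr => t /eqP ->.
Qed.
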